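(* Let $A\in\mathbb{C}^{m\times n}$ have rank $r$, $B\in\mathbb{C}^{m\times n}$ have rank $s$, and $E=B-A$. Then $$\|B^{\dagger}-A^{\dagger}\|_{F}^{2}\leq\min\big\{\delta_{1}+\|B^{\dagger}EA^{\dagger}\|_{F}^{2},\ \delta_{2}+\|A^{\dagger}EB^{\dagger}\|_{F}^{2}\big\},$$ where $$\delta_{1}:=\max\big\{\|A^{\dagger}\|_{2}^{4},\|B^{\dagger}\|_{2}^{4}\big\}\Big(\|E\|_{F}^{2}-\max\Big\{\frac{\|AA^{\dagger}EB^{\dagger}\|_{F}^{2}}{\|B^{\dagger}\|_{2}^{2}},\frac{\|A^{\dagger}EB^{\dagger}B\|_{F}^{2}}{\|A^{\dagger}\|_{2}^{2}}\Big\}\Big),$$ $$\delta_{2}:=\max\big\{\|A^{\dagger}\|_{2}^{4},\|B^{\dagger}\|_{2}^{4}\big\}\Big(\|E\|_{F}^{2}-\max\Big\{\frac{\|BB^{\dagger}EA^{\dagger}\|_{F}^{2}}{\|A^{\dagger}\|_{2}^{2}},\frac{\|B^{\dagger}EA^{\dagger}A\|_{F}^{2}}{\|B^{\dagger}\|_{2}^{2}}\Big\}\Big).$$ In particular, if $s=r$, then $$\|B^{\dagger}-A^{\dagger}\|_{F}^{2}\leq\min\big\{\varepsilon_{1}+\|B^{\dagger}EA^{\dagger}\|_{F}^{2},\ \varepsilon_{2}+\|A^{\dagger}EB^{\dagger}\|_{F}^{2}\big\},$$ where $$\varepsilon_{1}:=\|A^{\dagger}\|_{2}^{2}\|B^{\dagger}\|_{2}^{2}\Big(\|E\|_{F}^{2}-\max\Big\{\frac{\|BB^{\dagger}EA^{\dagger}\|_{F}^{2}}{\|A^{\dagger}\|_{2}^{2}},\frac{\|B^{\dagger}EA^{\dagger}A\|_{F}^{2}}{\|B^{\dagger}\|_{2}^{2}}\Big\}\Big),$$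 $$\varepsilon_{2}:=\|A^{\dagger}\|_{2}^{2}\|B^{\dagger}\|_{2}^{2}\Big(\|E\|_{F}^{2}-\max\Big\{\frac{\|AA^{\dagger}EB^{\dagger}\|_{F}^{2}}{\|B^{\dagger}\|_{2}^{2}},\frac{\|A^{\dagger}EB^{\dagger}B\|_{F}^{2}}{\|A^{\dagger}\|_{2}^{2}}\Big\}\Big).$$
   Context: $M^{\dagger}$ denotes the Moore–Penrose inverse of $M$, $\|\cdot\|_{2}$ the spectral norm and $\|\cdot\|_{F}$ the Frobenius norm. *)

From HB Require Import structures.
From mathcomp Require Import all_boot all_order all_algebra.
From mathcomp Require Import complex.
From mathcomp Require Import classical_sets reals.
Set Implicit Arguments. Unset Strict Implicit. Unset Printing Implicit Defensive.
Import Order.TTheory GRing.Theory Num.Theory.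
Local Open Scope ring_scope.
Local Open Scope classical_set_scope.

Section Defs.
Variable R : realType.

Definition cabs2 (z : R[i]) : R := let: Complex a b := z in a ^+ 2 + b ^+ 2.

Definition ctrmx (m n : nat) (M : 'M[R[i]]_(m, n)) : 'M[R[i]]_(n, m) :=
  map_mx (@conjc R) M^T.

Definition frob2 (m n : nat) (M : 'M[R[i]]_(m, n)) : R :=
  \sum_(i < m) \sum_(j < n) cabs2 (M i j).

Definition frob (m n : nat) (M : 'M[R[i]]_(m, n)) : R := Num.sqrt (frob2 M).

Definition specnorm (m n : nat) (M : 'M[R[i]]_(m, n)) : R :=
  sup [set frob (M *m x) | x in [set x : 'cV[R[i]]_n | frob x <= 1]].

Definition is_MP (m n : nat) (A : 'M[R[i]]_(m, n)) (X : 'M[R[i]]_(n, m)) : Prop :=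
  [/\ A *m X *m A = A, X *m A *m X = X,
      ctrmx (A *m X) = A *m X & ctrmx (X *m A) = X *m A].

End Defs.

From HB Require Import structures.
From mathcomp Require Import all_boot all_order all_algebra.
From mathcomp Require Import complex.
From mathcomp Require Import classical_sets reals.
From mathcomp Require Import ring lra.
Set Implicit Arguments. Unset Strict Implicit. Unset Printing Implicit Defensive.
Import Order.TTheory GRing.Theory Num.Theory.
Local Open Scope ring_scope.

(* Let P = A A^+ and Q = B^+ B be the orthogonal projections onto the range of
   A and the row space of B.  Then B^+ - A^+ = B^+(1 - P) - (1 - Q)A^+ - B^+ E A^+
   with pairwise Frobenius-orthogonal terms, and since (1 - P) E (1 - Q) = 0,
   E = (1 - P)EQ + PE(1 - Q) + PEQ orthogonally as well.  Writing
   B^+(1 - P) = B^+ B^+* ((1 - P)E)^* and (1 - Q)A^+ = -(E(1 - Q))^* A^+* A^+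
   bounds the first two terms by |B^+|^4 |(1 - P)EQ|^2 and |A^+|^4 |PE(1 - Q)|^2,
   while |PEQ|^2 dominates both quotients in the maximum; this gives delta1.
   If rank A = rank B, the projections A A^+ and B B^+ (resp. A^+ A and B^+ B)
   have equal rank, so |B B^+ (1 - A A^+)| = |A A^+ (1 - B B^+)|, which trades
   one factor |B^+|^2 for |A^+|^2 against the splitting of E along B B^+ and
   A^+ A; this gives eps1.  Exchanging A and B gives delta2 and eps2. *)


Section FrobeniusInnerProduct.
Variable R : realType.
Local Notation C := R[i].

(* Re (z * w^* ), the real inner product of C = R^2. *)
Definition rdot (z w : C) : R :=
  complex.Re z * complex.Re w + complex.Im z * complex.Im w.

Lemma rdotC z w : rdot z w = rdot w z.
Proof. by rewrite /rdot mulrC [complex.Im z * _]mulrC. Qed.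

Lemma rdotDl x y z : rdot (x + y) z = rdot x z + rdot y z.
Proof. case: x => a b; case: y => c d; case: z => e f; rewrite /rdot /=; ring. Qed.

Lemma rdotNl x z : rdot (- x) z = - rdot x z.
Proof. case: x => a b; case: z => e f; rewrite /rdot /=; ring. Qed.

Lemma rdot0l z : rdot 0 z = 0.
Proof. by case: z => a b; rewrite /rdot /= !mul0r addr0. Qed.

Lemma rdotMl a b c : rdot (a * b) c = rdot b (conjc a * c).
Proof. case: a => a1 a2; case: b => b1 b2; case: c => c1 c2; rewrite /rdot /=; ring. Qed.

Lemma rdotJ a b : rdot (conjc a) (conjc b) = rdot a b.
Proof. case: a => a1 a2; case: b => b1 b2; rewrite /rdot /=; ring. Qed.

Lemma rdotZl (t : R) a b : rdot (t%:C * a)%C b = t * rdot a b.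
Proof. case: a => a1 a2; case: b => b1 b2; rewrite /rdot /=; ring. Qed.

Lemma rdot1r (t : R) : rdot 1 t%:C%C = t.
Proof. by rewrite /rdot /= mul1r mul0r addr0. Qed.

Lemma rdotxx z : rdot z z = cabs2 z.
Proof. by case: z => a b; rewrite /rdot /= !expr2. Qed.

Lemma rdot_suml I (r : seq I) (P : pred I) (F : I -> C) z :
  rdot (\sum_(i <- r | P i) F i) z = \sum_(i <- r | P i) rdot (F i) z.
Proof. by elim/big_rec2: _ => [|i y1 y2 _ <-]; rewrite ?rdot0l ?rdotDl. Qed.

Lemma cabs2_ge0 (z : C) : 0 <= cabs2 z.
Proof. by case: z => a b /=; rewrite addr_ge0 ?sqr_ge0. Qed.

Lemma cabs2_eq0 (z : C) : cabs2 z = 0 -> z = 0.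
Proof.
case: z => a b /= /eqP; rewrite paddr_eq0 ?sqr_ge0 // !sqrf_eq0.
by case/andP=> /eqP-> /eqP->.
Qed.

Lemma cabs2M (a b : C) : cabs2 (a * b) = cabs2 a * cabs2 b.
Proof. case: a => a1 a2; case: b => b1 b2; rewrite /=; ring. Qed.

Lemma cabs2R (t : R) : cabs2 t%:C%C = t ^+ 2.
Proof. by rewrite /= expr0n /= addr0. Qed.

Lemma ctrmxE m n (M : 'M[C]_(m, n)) i j : ctrmx M i j = conjc (M j i).
Proof. by rewrite /ctrmx !mxE. Qed.

Lemma ctrmxK m n (M : 'M[C]_(m, n)) : ctrmx (ctrmx M) = M.
Proof. by apply/matrixP => i j; rewrite !ctrmxE conjcK. Qed.

Lemma ctrmxM m n p (X : 'M[C]_(m, n)) (Y : 'M[C]_(n, p)) :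
  ctrmx (X *m Y) = ctrmx Y *m ctrmx X.
Proof. by rewrite /ctrmx trmx_mul map_mxM. Qed.

Lemma ctrmxB m n (X Y : 'M[C]_(m, n)) : ctrmx (X - Y) = ctrmx X - ctrmx Y.
Proof. by rewrite /ctrmx linearB map_mxB. Qed.

Lemma ctrmx0 m n : ctrmx (0 : 'M[C]_(m, n)) = 0.
Proof. by apply/matrixP => i j; rewrite ctrmxE !mxE conjc0. Qed.

Lemma ctrmx1 n : ctrmx (1%:M : 'M[C]_n) = 1%:M.
Proof. by rewrite /ctrmx trmx1 map_mx1. Qed.

Definition frobdot m n (X Y : 'M[C]_(m, n)) : R :=
  \sum_i \sum_j rdot (X i j) (Y i j).

Lemma frob2_dot m n (X : 'M[C]_(m, n)) : frob2 X = frobdot X X.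
Proof. by apply: eq_bigr => i _; apply: eq_bigr => j _; rewrite rdotxx. Qed.

Lemma frobdotC m n (X Y : 'M[C]_(m, n)) : frobdot X Y = frobdot Y X.
Proof. by apply: eq_bigr => i _; apply: eq_bigr => j _; rewrite rdotC. Qed.

Lemma frobdotDl m n (X Y Z : 'M[C]_(m, n)) :
  frobdot (X + Y) Z = frobdot X Z + frobdot Y Z.
Proof.
rewrite /frobdot -big_split; apply: eq_bigr => i _; rewrite -big_split.
by apply: eq_bigr => j _; rewrite mxE rdotDl.
Qed.

Lemma frobdotDr m n (X Y Z : 'M[C]_(m, n)) :
  frobdot Z (X + Y) = frobdot Z X + frobdot Z Y.
Proof. by rewrite frobdotC frobdotDl !(frobdotC Z). Qed.

Lemma frobdotNl m n (X Z : 'M[C]_(m, n)) : frobdot (- X) Z = - frobdot X Z.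
Proof.
rewrite /frobdot -sumrN; apply: eq_bigr => i _; rewrite -sumrN.
by apply: eq_bigr => j _; rewrite mxE rdotNl.
Qed.

Lemma frobdotZl m n (t : R) (X Y : 'M[C]_(m, n)) :
  frobdot (t%:C%C *: X) Y = t * frobdot X Y.
Proof.
rewrite /frobdot mulr_sumr; apply: eq_bigr => i _; rewrite mulr_sumr.
by apply: eq_bigr => j _; rewrite mxE rdotZl.
Qed.

Lemma frobdot0l m n (Z : 'M[C]_(m, n)) : frobdot 0 Z = 0.
Proof. by rewrite /frobdot big1 // => i _; rewrite big1 // => j _; rewrite mxE rdot0l. Qed.

Lemma frobdot0r m n (Z : 'M[C]_(m, n)) : frobdot Z 0 = 0.
Proof. by rewrite frobdotC frobdot0l. Qed.

Lemma frobdot_ctrmx m n (X Y : 'M[C]_(m, n)) :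
  frobdot (ctrmx X) (ctrmx Y) = frobdot X Y.
Proof.
rewrite /frobdot exchange_big; apply: eq_bigr => i _; apply: eq_bigr => j _.
by rewrite !ctrmxE rdotJ.
Qed.

Lemma frobdot_mull m n p (M : 'M[C]_(m, n)) (X : 'M[C]_(n, p)) Y :
  frobdot (M *m X) Y = frobdot X (ctrmx M *m Y).
Proof.
rewrite /frobdot.
transitivity (\sum_(i < m) \sum_(j < p) \sum_(k < n)
                rdot (X k j) (conjc (M i k) * Y i j)).
  apply: eq_bigr => i _; apply: eq_bigr => j _; rewrite mxE rdot_suml.
  by apply: eq_bigr => k _; rewrite rdotMl.
rewrite exchange_big [RHS]exchange_big /=; apply: eq_bigr => j _.
rewrite exchange_big; apply: eq_bigr => k _; rewrite mxE rdotC rdot_suml.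
by apply: eq_bigr => i _; rewrite ctrmxE rdotC.
Qed.

Lemma frobdot_mulr m n p (M : 'M[C]_(n, p)) (X : 'M[C]_(m, n)) Y :
  frobdot (X *m M) Y = frobdot X (Y *m ctrmx M).
Proof.
by rewrite -frobdot_ctrmx ctrmxM frobdot_mull ctrmxK -frobdot_ctrmx ctrmxK ctrmxM ctrmxK.
Qed.

Lemma frob2_ge0 m n (X : 'M[C]_(m, n)) : 0 <= frob2 X.
Proof. by apply: sumr_ge0 => i _; apply: sumr_ge0 => j _; apply: cabs2_ge0. Qed.

Lemma frob_ge0 m n (X : 'M[C]_(m, n)) : 0 <= frob X.
Proof. exact: sqrtr_ge0. Qed.

Lemma sqr_frob m n (X : 'M[C]_(m, n)) : frob X ^+ 2 = frob2 X.
Proof. by rewrite /frob sqr_sqrtr // frob2_ge0. Qed.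

Lemma frob2_eq0 m n (X : 'M[C]_(m, n)) : frob2 X = 0 -> X = 0.
Proof.
move=> /eqP; rewrite psumr_eq0 => [/allP X0|i _]; last first.
  by apply: sumr_ge0 => j _; apply: cabs2_ge0.
apply/matrixP => i j; rewrite mxE; move/implyP: (X0 i (mem_index_enum _)).
rewrite psumr_eq0 => [/(_ isT)/allP/(_ j (mem_index_enum _))|k _]; last first.
  exact: cabs2_ge0.
by move=> /implyP/(_ isT)/eqP/cabs2_eq0.
Qed.

Lemma frob_eq0 m n (X : 'M[C]_(m, n)) : frob X = 0 -> X = 0.
Proof. by move=> X0; apply: frob2_eq0; rewrite -sqr_frob X0 expr0n. Qed.

Lemma frob2D m n (X Y : 'M[C]_(m, n)) :
  frob2 (X + Y) = frob2 X + frob2 Y + 2 * frobdot X Y.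
Proof. by rewrite !frob2_dot frobdotDl !frobdotDr [frobdot Y X]frobdotC; ring. Qed.

Lemma frob2N m n (X : 'M[C]_(m, n)) : frob2 (- X) = frob2 X.
Proof. by rewrite !frob2_dot frobdotNl frobdotC frobdotNl opprK. Qed.

Lemma frob2B m n (X Y : 'M[C]_(m, n)) :
  frob2 (X - Y) = frob2 X + frob2 Y - 2 * frobdot X Y.
Proof.
rewrite frob2D frob2N frobdotC frobdotNl frobdotC; ring.
Qed.

Lemma frob2_sub3 m n (X Y Z : 'M[C]_(m, n)) :
  frobdot X Y = 0 -> frobdot X Z = 0 -> frobdot Y Z = 0 ->
  frob2 (X - Y - Z) = frob2 X + frob2 Y + frob2 Z.
Proof.
move=> XY XZ YZ; rewrite !frob2B frobdotDl frobdotNl XY XZ YZ; ring.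
Qed.

Lemma frob2_ctrmx m n (X : 'M[C]_(m, n)) : frob2 (ctrmx X) = frob2 X.
Proof. by rewrite !frob2_dot frobdot_ctrmx. Qed.

Lemma frob2Z m n (c : C) (X : 'M[C]_(m, n)) : frob2 (c *: X) = cabs2 c * frob2 X.
Proof.
rewrite /frob2 mulr_sumr; apply: eq_bigr => i _; rewrite mulr_sumr.
by apply: eq_bigr => j _; rewrite mxE cabs2M.
Qed.

Lemma frobZ m n (c : C) (X : 'M[C]_(m, n)) :
  frob (c *: X) = Num.sqrt (cabs2 c) * frob X.
Proof. by rewrite /frob frob2Z sqrtrM // cabs2_ge0. Qed.

Lemma frob2_0 m n : frob2 (0 : 'M[C]_(m, n)) = 0.
Proof. by rewrite frob2_dot frobdot0l. Qed.

Lemma frob0 m n : frob (0 : 'M[C]_(m, n)) = 0.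
Proof. by rewrite /frob frob2_0 sqrtr0. Qed.

(* Cauchy-Schwarz, from 0 <= |b X - a Y|^2 with a = |X|, b = |Y|. *)
Lemma frobdot_le m n (X Y : 'M[C]_(m, n)) : frobdot X Y <= frob X * frob Y.
Proof.
have [/frob_eq0->|nX] := eqVneq (frob X) 0.
  by rewrite frobdot0l mulr_ge0 ?frob_ge0.
have [/frob_eq0->|nY] := eqVneq (frob Y) 0.
  by rewrite frobdot0r mulr_ge0 ?frob_ge0.
have a0 : 0 < frob X by rewrite lt_def nX frob_ge0.
have b0 : 0 < frob Y by rewrite lt_def nY frob_ge0.
have := frob2_ge0 ((frob Y)%:C%C *: X - (frob X)%:C%C *: Y).
rewrite frob2B !frob2Z !cabs2R frobdotZl frobdotC frobdotZl -!sqr_frob => H.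
have : 0 <= 2 * (frob X * frob Y) * (frob X * frob Y - frobdot Y X) by nra.
by rewrite frobdotC pmulr_rge0 ?subr_ge0 // !mulr_gt0.
Qed.

Lemma frobD_le m n (X Y : 'M[C]_(m, n)) : frob (X + Y) <= frob X + frob Y.
Proof.
rewrite -(ler_pXn2r (isT : (0 < 2)%N)) ?nnegrE ?addr_ge0 ?frob_ge0 //.
rewrite sqr_frob frob2D -!sqr_frob; have := frobdot_le X Y; nra.
Qed.

Lemma frob_sum_le m n I (r : seq I) (F : I -> 'M[C]_(m, n)) :
  frob (\sum_(i <- r) F i) <= \sum_(i <- r) frob (F i).
Proof.
elim/big_rec2: _ => [|i y1 y2 _ IH]; first by rewrite frob0.
exact: le_trans (frobD_le _ _) (lerD _ IH).
Qed.

End FrobeniusInnerProduct.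

Section SpectralNorm.
Variable R : realType.
Local Notation C := R[i].
Local Open Scope classical_set_scope.

Lemma mulmx_colE m n (M : 'M[C]_(m, n)) (x : 'cV[C]_n) :
  M *m x = \sum_j x j 0 *: col j M.
Proof.
apply/matrixP => i k; rewrite !mxE summxE; apply: eq_bigr => j _.
by rewrite !mxE (ord1 k) mulrC.
Qed.

Lemma cabs2_le_frob2 m n (X : 'M[C]_(m, n)) i j : cabs2 (X i j) <= frob2 X.
Proof.
rewrite /frob2 (bigD1 i) //= (bigD1 j) //= -addrA lerDl addr_ge0 //.
  by apply: sumr_ge0 => k _; apply: cabs2_ge0.
by apply: sumr_ge0 => k _; apply: sumr_ge0 => l _; apply: cabs2_ge0.
Qed.

Lemma frob_mulmx_le_sum_col m n (M : 'M[C]_(m, n)) (x : 'cV[C]_n) :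
  frob x <= 1 -> frob (M *m x) <= \sum_j frob (col j M).
Proof.
move=> x1; have x1' : frob2 x <= 1.
  by rewrite -sqr_frob -(expr1n _ 2) ler_pXn2r ?nnegrE ?frob_ge0.
rewrite mulmx_colE; apply: le_trans (frob_sum_le _ _) _.
apply: ler_sum => j _; rewrite frobZ -[leRHS]mul1r ler_wpM2r ?frob_ge0 //.
by rewrite -sqrtr1 ler_sqrt // (le_trans (cabs2_le_frob2 _ _ _)).
Qed.

Lemma specnorm_has_sup m n (M : 'M[C]_(m, n)) :
  has_sup [set frob (M *m x) | x in [set x : 'cV[C]_n | frob x <= 1]].
Proof.
split; first by exists (frob (M *m (0 : 'cV[C]_n))), 0; rewrite //= frob0 ler01.
by exists (\sum_j frob (col j M)) => _ [x /= x1 <-]; apply: frob_mulmx_le_sum_col.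
Qed.

Lemma frob_mulmx_le_specnorm m n (M : 'M[C]_(m, n)) (x : 'cV[C]_n) :
  frob x <= 1 -> frob (M *m x) <= specnorm M.
Proof. by move=> x1; apply: (sup_upper_bound (specnorm_has_sup M)); exists x. Qed.

Lemma specnorm_ge0 m n (M : 'M[C]_(m, n)) : 0 <= specnorm M.
Proof.
by have := @frob_mulmx_le_specnorm _ _ M 0; rewrite mulmx0 !frob0; apply; apply: ler01.
Qed.

Lemma frob_mulmx_le m n (M : 'M[C]_(m, n)) (x : 'cV[C]_n) :
  frob (M *m x) <= specnorm M * frob x.
Proof.
have [/frob_eq0->|nx] := eqVneq (frob x) 0; first by rewrite mulmx0 !frob0 mulr0.
have x0 : 0 < frob x by rewrite lt_def nx frob_ge0.
have := frob_mulmx_le_specnorm M (x := (frob x)^-1%:C%C *: x).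
rewrite -scalemxAr !frobZ cabs2R sqrtr_sqr ger0_norm ?invr_ge0 ?frob_ge0 //.
by rewrite mulVf // lexx mulrC ler_pdivrMr // => /(_ isT).
Qed.

(* |M^* x|^2 = <x, M M^* x> <= |x| |M| |M^* x| *)
Lemma frob_ctrmx_mulmx_le m n (M : 'M[C]_(m, n)) (x : 'cV[C]_m) :
  frob (ctrmx M *m x) <= specnorm M * frob x.
Proof.
set a := frob (ctrmx M *m x).
have a0 : 0 <= a by apply: frob_ge0.
have [->|an0] := eqVneq a 0; first by rewrite mulr_ge0 ?specnorm_ge0 ?frob_ge0.
have aa : a * a <= (specnorm M * frob x) * a.
  rewrite -expr2 /a sqr_frob frob2_dot frobdot_mull ctrmxK frobdotC.
  apply: le_trans (frobdot_le _ _) _.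
  by rewrite mulrAC ler_wpM2r ?frob_ge0 // frob_mulmx_le.
by rewrite -(ler_pM2r (_ : 0 < a)) // lt_def an0.
Qed.

Lemma frob2_col_sum m n (X : 'M[C]_(m, n)) : frob2 X = \sum_j frob2 (col j X).
Proof.
rewrite /frob2 exchange_big; apply: eq_bigr => j _; apply: eq_bigr => i _.
by rewrite big_ord1 mxE.
Qed.

Lemma frob2_mulmx_col_le m n p (N : 'M[C]_(m, n)) (k : R) (X : 'M[C]_(n, p)) :
  0 <= k -> (forall v : 'cV[C]_n, frob (N *m v) <= k * frob v) ->
  frob2 (N *m X) <= k ^+ 2 * frob2 X.
Proof.
move=> k0 Nk; rewrite !frob2_col_sum mulr_sumr; apply: ler_sum => j _.
rewrite colE -mulmxA -colE -!sqr_frob -exprMn.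
by rewrite ler_pXn2r ?nnegrE ?mulr_ge0 ?frob_ge0.
Qed.

Lemma frob2_mulmxl_le m n p (M : 'M[C]_(m, n)) (X : 'M[C]_(n, p)) :
  frob2 (M *m X) <= specnorm M ^+ 2 * frob2 X.
Proof. exact/frob2_mulmx_col_le/frob_mulmx_le/specnorm_ge0. Qed.

Lemma frob2_ctrmx_mulmxl_le m n p (M : 'M[C]_(m, n)) (X : 'M[C]_(m, p)) :
  frob2 (ctrmx M *m X) <= specnorm M ^+ 2 * frob2 X.
Proof. exact/frob2_mulmx_col_le/frob_ctrmx_mulmx_le/specnorm_ge0. Qed.

Lemma frob2_mulmxr_le m n p (M : 'M[C]_(n, p)) (X : 'M[C]_(m, n)) :
  frob2 (X *m M) <= frob2 X * specnorm M ^+ 2.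
Proof.
by rewrite -frob2_ctrmx ctrmxM mulrC -(frob2_ctrmx X) frob2_ctrmx_mulmxl_le.
Qed.

Lemma frob2_mulmxr_ctrmx_le m n p (M : 'M[C]_(p, n)) (X : 'M[C]_(m, n)) :
  frob2 (X *m ctrmx M) <= frob2 X * specnorm M ^+ 2.
Proof.
by rewrite -frob2_ctrmx ctrmxM ctrmxK mulrC -(frob2_ctrmx X) frob2_mulmxl_le.
Qed.

(* With x / 0 = 0 these also hold when the spectral norm vanishes. *)
Lemma frob2_mulmxl_div_le m n p (M : 'M[C]_(m, n)) (X : 'M[C]_(n, p)) :
  frob2 (M *m X) / specnorm M ^+ 2 <= frob2 X.
Proof.
have [->|M0] := eqVneq (specnorm M) 0; first by rewrite expr0n invr0 mulr0 frob2_ge0.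
have M2 : 0 < specnorm M ^+ 2 by rewrite exprn_gt0 // lt_def M0 specnorm_ge0.
by rewrite ler_pdivrMr // mulrC frob2_mulmxl_le.
Qed.

Lemma frob2_mulmxr_div_le m n p (M : 'M[C]_(n, p)) (X : 'M[C]_(m, n)) :
  frob2 (X *m M) / specnorm M ^+ 2 <= frob2 X.
Proof.
have [->|M0] := eqVneq (specnorm M) 0; first by rewrite expr0n invr0 mulr0 frob2_ge0.
have M2 : 0 < specnorm M ^+ 2 by rewrite exprn_gt0 // lt_def M0 specnorm_ge0.
by rewrite ler_pdivrMr // frob2_mulmxr_le.
Qed.

End SpectralNorm.

Lemma mxtrace_idem (F : fieldType) k (P : 'M[F]_k) :
  P *m P = P -> \tr P = (\rank P)%:R.
Proof.
move=> PP; have [L LC] := row_fullP (col_base_full P).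
have [K RK] := row_freeP (row_base_free P).
suff RC : row_base P *m col_base P = 1%:M.
  by rewrite -{1}(mulmx_base P) mxtrace_mulC RC mxtrace1.
move: PP LC RK; rewrite -{1 2 3}(mulmx_base P).
move: (col_base P) (row_base P) => Cb Rb PP LC RK.
have := congr1 (fun X => L *m X *m K) PP.
by rewrite /= !mulmxA LC mul1mx -!mulmxA RK mulmx1.
Qed.

Section OrthogonalProjection.
Variable R : realType.
Local Notation C := R[i].

Definition orthoproj k (P : 'M[C]_k) := P *m P = P /\ ctrmx P = P.

Section OneProjection.
Variables (k : nat) (P : 'M[C]_k).
Hypothesis hP : orthoproj P.

Lemma orthoprojC : orthoproj (1%:M - P).
Proof.
case: hP => PP Ph; split; last by rewrite ctrmxB ctrmx1 Ph.
by rewrite mulmxBl mul1mx mulmxBr mulmx1 PP subrr subr0.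
Qed.

Lemma orthoproj_mulmxC : P *m (1%:M - P) = 0.
Proof. by case: hP => PP _; rewrite mulmxBr mulmx1 PP subrr. Qed.

Lemma orthoprojC_mulmx : (1%:M - P) *m P = 0.
Proof. by case: hP => PP _; rewrite mulmxBl mul1mx PP subrr. Qed.

Lemma frobdot_orthoproj_mull m (X Y : 'M[C]_(k, m)) :
  frobdot (P *m X) ((1%:M - P) *m Y) = 0.
Proof. by case: hP => _ Ph; rewrite frobdot_mull Ph mulmxA orthoproj_mulmxC mul0mx frobdot0r. Qed.

Lemma frobdot_orthoproj_mulr m (X Y : 'M[C]_(m, k)) :
  frobdot (X *m P) (Y *m (1%:M - P)) = 0.
Proof.
case: hP => _ Ph.
by rewrite frobdot_mulr Ph -mulmxA orthoprojC_mulmx mulmx0 frobdot0r.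
Qed.

Lemma frob2_orthoproj_splitl m (X : 'M[C]_(k, m)) :
  frob2 X = frob2 (P *m X) + frob2 ((1%:M - P) *m X).
Proof.
rewrite {1}(_ : X = P *m X + (1%:M - P) *m X); last by rewrite mulmxBl mul1mx addrC subrK.
by rewrite frob2D frobdot_orthoproj_mull mulr0 addr0.
Qed.

Lemma frob2_orthoproj_splitr m (X : 'M[C]_(m, k)) :
  frob2 X = frob2 (X *m P) + frob2 (X *m (1%:M - P)).
Proof.
rewrite {1}(_ : X = X *m P + X *m (1%:M - P)); last by rewrite mulmxBr mulmx1 addrC subrK.
by rewrite frob2D frobdot_orthoproj_mulr mulr0 addr0.
Qed.

Lemma frob2_orthoproj : frob2 P = (\rank P)%:R.
Proof.
case: hP => PP Ph.
have -> : frob2 P = frobdot 1%:M P.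
  by rewrite frob2_dot -{1}[P]mulmx1 frobdot_mull Ph PP.
rewrite -[RHS]rdot1r rmorph_nat -mxtrace_idem // /mxtrace.
rewrite rdotC rdot_suml /frobdot; apply: eq_bigr => i _.
rewrite (bigD1 i) //= big1 ?addr0 => [|j ji]; first by rewrite mxE eqxx mulr1n rdotC.
by rewrite mxE eq_sym (negbTE ji) mulr0n rdot0l.
Qed.

End OneProjection.

Lemma frob2_split3 m n (P : 'M[C]_m) (Q : 'M[C]_n) (X : 'M[C]_(m, n)) :
  orthoproj P -> orthoproj Q -> (1%:M - P) *m X *m (1%:M - Q) = 0 ->
  frob2 X = frob2 ((1%:M - P) *m X *m Q) + frob2 (P *m X *m (1%:M - Q))
            + frob2 (P *m X *m Q).
Proof.
move=> hP hQ cross.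
rewrite (frob2_orthoproj_splitl hP X) (frob2_orthoproj_splitr hQ (P *m X)).
by rewrite (frob2_orthoproj_splitr hQ (_ *m X)) cross frob2_0; ring.
Qed.

Lemma frob2_orthoproj_mulC k (P1 P2 : 'M[C]_k) : orthoproj P1 -> orthoproj P2 ->
  frob2 (P1 *m (1%:M - P2)) = (\rank P1)%:R - frobdot P1 P2.
Proof.
move=> hP1 [P22 P2h]; have [P11 P1h] := hP1.
have -> : frobdot P1 P2 = frob2 (P1 *m P2).
  by rewrite frob2_dot frobdot_mulr P2h -mulmxA P22 [RHS]frobdotC frobdot_mull P1h P11 frobdotC.
by rewrite -(frob2_orthoproj hP1) (frob2_orthoproj_splitr (conj P22 P2h) P1); ring.
Qed.

(* Both sides equal the common rank minus <P1, P2>. *)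
Lemma frob2_orthoproj_mulC_sym k (P1 P2 : 'M[C]_k) :
  orthoproj P1 -> orthoproj P2 -> \rank P1 = \rank P2 ->
  frob2 (P1 *m (1%:M - P2)) = frob2 (P2 *m (1%:M - P1)).
Proof. by move=> hP1 hP2 rk; rewrite !frob2_orthoproj_mulC // rk frobdotC. Qed.

Lemma frob2_orthoprojC_mul k (P1 P2 : 'M[C]_k) : orthoproj P1 -> orthoproj P2 ->
  frob2 ((1%:M - P2) *m P1) = frob2 (P1 *m (1%:M - P2)).
Proof.
move=> [_ P1h] /orthoprojC [_ P2h].
by rewrite -frob2_ctrmx ctrmxM P1h P2h.
Qed.

End OrthogonalProjection.

Lemma compl_mulmx_eq0 (F : pzRingType) m n (P : 'M[F]_m) (X : 'M[F]_(m, n)) :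
  (1%:M - P) *m X = 0 -> P *m X = X.
Proof. by rewrite mulmxBl mul1mx => /eqP; rewrite subr_eq0 eq_sym => /eqP. Qed.

Lemma mulmx_compl_eq0 (F : pzRingType) m n (Q : 'M[F]_n) (X : 'M[F]_(m, n)) :
  X *m (1%:M - Q) = 0 -> X *m Q = X.
Proof. by rewrite mulmxBr mulmx1 => /eqP; rewrite subr_eq0 eq_sym => /eqP. Qed.

Section MoorePenrose.
Variable R : realType.
Local Notation C := R[i].
Variables (m n : nat) (A : 'M[C]_(m, n)) (Ad : 'M[C]_(n, m)).
Hypothesis hA : is_MP A Ad.

Lemma orthoproj_mulmx_pinv : orthoproj (A *m Ad).
Proof. by case: hA => AAdA _ AAdh _; split; rewrite ?mulmxA ?AAdA. Qed.

Lemma orthoproj_pinv_mulmx : orthoproj (Ad *m A).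
Proof. by case: hA => _ AdAAd _ AdAh; split; rewrite ?mulmxA ?AdAAd. Qed.

Lemma mxrank_mulmx_pinv : \rank (A *m Ad) = \rank A.
Proof.
case: hA => AAdA _ _ _; apply/eqP; rewrite eqn_leq mxrankM_maxl /=.
by rewrite -{1}AAdA mxrankM_maxl.
Qed.

Lemma mxrank_pinv_mulmx : \rank (Ad *m A) = \rank A.
Proof.
case: hA => AAdA _ _ _; apply/eqP; rewrite eqn_leq mxrankM_maxr /=.
by rewrite -{1}AAdA -mulmxA mxrankM_maxr.
Qed.

Lemma pinv_projC_mul : (1%:M - A *m Ad) *m A = 0.
Proof. by case: hA => AAdA _ _ _; rewrite mulmxBl mul1mx AAdA subrr. Qed.

Lemma mul_pinv_projC : A *m (1%:M - Ad *m A) = 0.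
Proof. by case: hA => AAdA _ _ _; rewrite mulmxBr mulmx1 mulmxA AAdA subrr. Qed.

Lemma pinvE_ctrmxr : Ad *m ctrmx Ad *m ctrmx A = Ad.
Proof. by case: hA => _ AdAAd AAdh _; rewrite -mulmxA -ctrmxM AAdh mulmxA. Qed.

Lemma pinvE_ctrmxl : ctrmx A *m (ctrmx Ad *m Ad) = Ad.
Proof. by case: hA => _ AdAAd _ AdAh; rewrite mulmxA -ctrmxM AdAh. Qed.

End MoorePenrose.

Section PinvPerturbation.
Variable R : realType.
Local Notation C := R[i].
Variables (m n : nat) (A B : 'M[C]_(m, n)) (Ad Bd : 'M[C]_(n, m)).
Hypotheses (hA : is_MP A Ad) (hB : is_MP B Bd).
Local Notation E := (B - A).
Local Notation nA := (specnorm Ad).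
Local Notation nB := (specnorm Bd).

Lemma pinv_sub_decomp :
  Bd - Ad = Bd *m (1%:M - A *m Ad) - (1%:M - Bd *m B) *m Ad - Bd *m E *m Ad.
Proof.
rewrite mulmxBr mulmxBl mulmx1 mul1mx !mulmxBr !mulmxBl !mulmxA.
move: (Bd *m A *m Ad) (Bd *m B *m Ad) => X Y.
by apply/matrixP => i j; rewrite !mxE; ring.
Qed.

Lemma frob2_pinv_sub : frob2 (Bd - Ad) =
  frob2 (Bd *m (1%:M - A *m Ad)) + frob2 ((1%:M - Bd *m B) *m Ad)
  + frob2 (Bd *m E *m Ad).
Proof.
have [_ AdAAd _ _] := hA; have [_ BdBBd _ _] := hB.
rewrite {1}pinv_sub_decomp frob2_sub3 //.
- rewrite -{1}BdBBd -mulmxA.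
  by apply: frobdot_orthoproj_mull; apply: orthoproj_pinv_mulmx.
- have -> : Bd *m E *m Ad = Bd *m E *m Ad *m (A *m Ad).
    by rewrite -[RHS]mulmxA (mulmxA Ad) AdAAd.
  by rewrite frobdotC; apply: frobdot_orthoproj_mulr; apply: orthoproj_mulmx_pinv.
- have -> : Bd *m E *m Ad = Bd *m B *m (Bd *m E *m Ad) by rewrite !mulmxA BdBBd.
  by rewrite frobdotC; apply: frobdot_orthoproj_mull; apply: orthoproj_pinv_mulmx.
Qed.

Lemma pinv_cross_eq0 : (1%:M - A *m Ad) *m E *m (1%:M - Bd *m B) = 0.
Proof.
by rewrite (mulmxBr (1%:M - _)) pinv_projC_mul // subr0 -mulmxA mul_pinv_projC // mulmx0.
Qed.

Lemma pinv_cross_eq0_swap : (1%:M - B *m Bd) *m E *m (1%:M - Ad *m A) = 0.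
Proof.
rewrite (mulmxBr (1%:M - _)) pinv_projC_mul // sub0r mulNmx -mulmxA.
by rewrite mul_pinv_projC // mulmx0 oppr0.
Qed.

(* Bd (1 - A Ad) = Bd Bd^* ((1 - A Ad) E)^*, since (1 - A Ad) A = 0. *)
Lemma frob2_pinv_projC_le : frob2 (Bd *m (1%:M - A *m Ad)) <=
  nB ^+ 4 * frob2 ((1%:M - A *m Ad) *m E *m (Bd *m B)).
Proof.
have [_ _ AAdh _] := hA.
rewrite (mulmx_compl_eq0 pinv_cross_eq0).
have -> : Bd *m (1%:M - A *m Ad) =
          Bd *m (ctrmx Bd *m ctrmx ((1%:M - A *m Ad) *m E)).
  rewrite ctrmxM ctrmxB mulmxBl -!ctrmxM pinv_projC_mul // ctrmx0 subr0.
  by rewrite ctrmxM !mulmxA pinvE_ctrmxr // ctrmxB ctrmx1 AAdh.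
apply: le_trans (frob2_mulmxl_le _ _) _.
rewrite (_ : 4 = 2 + 2)%N // exprD -mulrA ler_wpM2l ?sqr_ge0 //.
by rewrite -[X in _ <= _ * X]frob2_ctrmx frob2_ctrmx_mulmxl_le.
Qed.

(* (1 - Bd B) Ad = - (E (1 - Bd B))^* Ad^* Ad, since B (1 - Bd B) = 0. *)
Lemma frob2_projC_pinv_le : frob2 ((1%:M - Bd *m B) *m Ad) <=
  nA ^+ 4 * frob2 (A *m Ad *m E *m (1%:M - Bd *m B)).
Proof.
have [_ _ _ BdBh] := hB.
rewrite -mulmxA (compl_mulmx_eq0 (_ : _ *m (E *m _) = 0)); last first.
  by rewrite mulmxA pinv_cross_eq0.
have -> : (1%:M - Bd *m B) *m Ad =
          - (ctrmx (E *m (1%:M - Bd *m B)) *m ctrmx Ad *m Ad).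
  rewrite ctrmxM ctrmxB mulmxBr -!ctrmxM mul_pinv_projC // ctrmx0 sub0r.
  by rewrite ctrmxM !mulNmx opprK -!mulmxA pinvE_ctrmxl // ctrmxB ctrmx1 BdBh.
rewrite frob2N; apply: le_trans (frob2_mulmxr_le _ _) _.
rewrite (_ : 4 = 2 + 2)%N // exprD mulrC -mulrA ler_wpM2l ?sqr_ge0 // mulrC.
by rewrite -[X in _ <= X * _]frob2_ctrmx frob2_mulmxr_ctrmx_le.
Qed.

Lemma frob2_pinv_sub_le (P : 'M[C]_m) (Q : 'M[C]_n) (c1 c2 mx : R) :
  orthoproj P -> orthoproj Q -> (1%:M - P) *m E *m (1%:M - Q) = 0 ->
  0 <= c1 -> mx <= frob2 (P *m E *m Q) ->
  frob2 (Bd *m (1%:M - A *m Ad)) <= c1 * frob2 ((1%:M - P) *m E *m Q) ->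
  frob2 ((1%:M - Bd *m B) *m Ad) <= c2 * frob2 (P *m E *m (1%:M - Q)) ->
  frob2 (Bd - Ad) <= Num.max c2 c1 * (frob2 E - mx) + frob2 (Bd *m E *m Ad).
Proof.
move=> hP hQ cross c10 mx_le le1 le2.
have c0 : 0 <= Num.max c2 c1 by rewrite le_max c10 orbT.
rewrite frob2_pinv_sub (frob2_split3 hP hQ cross) lerD2r -addrA mulrDr.
rewrite -[leLHS]addr0 lerD ?mulr_ge0 ?subr_ge0 // mulrDr.
apply: lerD; [apply: le_trans le1 _ | apply: le_trans le2 _];
  by apply: ler_wpM2r; rewrite ?frob2_ge0 // le_max lexx ?orbT.
Qed.

Lemma max_frob2_div_le : Num.max (frob2 (A *m Ad *m E *m Bd) / nB ^+ 2)
                                 (frob2 (Ad *m E *m Bd *m B) / nA ^+ 2)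
                         <= frob2 (A *m Ad *m E *m (Bd *m B)).
Proof.
have [_ AdAAd _ _] := hA; have [_ BdBBd _ _] := hB.
rewrite ge_max; apply/andP; split.
  have -> : A *m Ad *m E *m Bd = A *m Ad *m E *m (Bd *m B) *m Bd.
    by rewrite -[RHS]mulmxA BdBBd.
  exact: frob2_mulmxr_div_le.
have -> : Ad *m E *m Bd *m B = Ad *m (A *m Ad *m E *m (Bd *m B)).
  by rewrite !mulmxA AdAAd.
exact: frob2_mulmxl_div_le.
Qed.

Lemma max_frob2_div_le_swap : Num.max (frob2 (B *m Bd *m E *m Ad) / nA ^+ 2)
                                      (frob2 (Bd *m E *m Ad *m A) / nB ^+ 2)
                              <= frob2 (B *m Bd *m E *m (Ad *m A)).
Proof.
have [_ AdAAd _ _] := hA; have [_ BdBBd _ _] := hB.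
rewrite ge_max; apply/andP; split.
  have -> : B *m Bd *m E *m Ad = B *m Bd *m E *m (Ad *m A) *m Ad.
    by rewrite -[RHS]mulmxA AdAAd.
  exact: frob2_mulmxr_div_le.
have -> : Bd *m E *m Ad *m A = Bd *m (B *m Bd *m E *m (Ad *m A)).
  by rewrite !mulmxA BdBBd.
exact: frob2_mulmxl_div_le.
Qed.

Lemma frob2_pinv_sub_le_max4 : frob2 (Bd - Ad) <=
  Num.max (nA ^+ 4) (nB ^+ 4) *
    (frob2 E - Num.max (frob2 (A *m Ad *m E *m Bd) / nB ^+ 2)
                       (frob2 (Ad *m E *m Bd *m B) / nA ^+ 2))
  + frob2 (Bd *m E *m Ad).
Proof.
exact: frob2_pinv_sub_le (orthoproj_mulmx_pinv hA) (orthoproj_pinv_mulmx hB)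
  pinv_cross_eq0 (exprn_ge0 _ (specnorm_ge0 _)) max_frob2_div_le
  frob2_pinv_projC_le frob2_projC_pinv_le.
Qed.

Section EqualRank.
Hypothesis rkAB : \rank A = \rank B.

Lemma frob2_pinv_projC_le_eqrank : frob2 (Bd *m (1%:M - A *m Ad)) <=
  nA ^+ 2 * nB ^+ 2 * frob2 ((1%:M - B *m Bd) *m E *m (Ad *m A)).
Proof.
have [_ AdAAd _ _] := hA; have [_ BdBBd _ _] := hB.
have hPA := orthoproj_mulmx_pinv hA; have hPB := orthoproj_mulmx_pinv hB.
have -> : Bd *m (1%:M - A *m Ad) = Bd *m (B *m Bd *m (1%:M - A *m Ad)).
  by rewrite !mulmxA BdBBd.
apply: le_trans (frob2_mulmxl_le _ _) _.
rewrite -[leRHS]mulrA [leRHS]mulrCA ler_wpM2l ?sqr_ge0 //.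
rewrite -(frob2_orthoproj_mulC_sym hPA hPB) ?mxrank_mulmx_pinv //.
rewrite -frob2_orthoprojC_mul //.
have -> : (1%:M - B *m Bd) *m (A *m Ad) =
          - ((1%:M - B *m Bd) *m E *m (Ad *m A) *m Ad).
  rewrite -mulmxA AdAAd (mulmxBr (1%:M - _)) pinv_projC_mul // sub0r.
  by rewrite mulNmx opprK mulmxA.
by rewrite frob2N mulrC frob2_mulmxr_le.
Qed.

Lemma frob2_projC_pinv_le_eqrank : frob2 ((1%:M - Bd *m B) *m Ad) <=
  nA ^+ 2 * nB ^+ 2 * frob2 (B *m Bd *m E *m (1%:M - Ad *m A)).
Proof.
have [_ AdAAd _ _] := hA; have [_ BdBBd _ _] := hB.
have hQA := orthoproj_pinv_mulmx hA; have hQB := orthoproj_pinv_mulmx hB.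
have -> : (1%:M - Bd *m B) *m Ad = (1%:M - Bd *m B) *m (Ad *m A) *m Ad.
  by rewrite -mulmxA AdAAd.
apply: le_trans (frob2_mulmxr_le _ _) _.
rewrite -[leRHS]mulrA [leRHS]mulrC ler_wpM2r ?sqr_ge0 //.
rewrite frob2_orthoprojC_mul // frob2_orthoproj_mulC_sym ?mxrank_pinv_mulmx //.
have -> : Bd *m B *m (1%:M - Ad *m A) = Bd *m (B *m Bd *m E *m (1%:M - Ad *m A)).
  by rewrite !mulmxA BdBBd -!mulmxA (mulmxBl B A) mul_pinv_projC // subr0.
exact: frob2_mulmxl_le.
Qed.

Lemma frob2_pinv_sub_le_eqrank : frob2 (Bd - Ad) <=
  nA ^+ 2 * nB ^+ 2 *
    (frob2 E - Num.max (frob2 (B *m Bd *m E *m Ad) / nA ^+ 2)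
                       (frob2 (Bd *m E *m Ad *m A) / nB ^+ 2))
  + frob2 (Bd *m E *m Ad).
Proof.
have := frob2_pinv_sub_le (orthoproj_mulmx_pinv hB) (orthoproj_pinv_mulmx hA)
  pinv_cross_eq0_swap (mulr_ge0 (sqr_ge0 _) (sqr_ge0 _)) max_frob2_div_le_swap
  frob2_pinv_projC_le_eqrank frob2_projC_pinv_le_eqrank.
by rewrite maxxx.
Qed.

End EqualRank.

End PinvPerturbation.

Theorem theorem3p5 (R : realType) (m n : nat) (A B : 'M[R[i]]_(m, n))
    (Ad Bd : 'M[R[i]]_(n, m)) (hA : is_MP A Ad) (hB : is_MP B Bd) :
  let E := B - A in
  let nA := specnorm Ad in
  let nB := specnorm Bd in
  let delta1 := Num.max (nA ^+ 4) (nB ^+ 4) *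
      (frob E ^+ 2 - Num.max (frob (A *m Ad *m E *m Bd) ^+ 2 / nB ^+ 2)
                             (frob (Ad *m E *m Bd *m B) ^+ 2 / nA ^+ 2)) in
  let delta2 := Num.max (nA ^+ 4) (nB ^+ 4) *
      (frob E ^+ 2 - Num.max (frob (B *m Bd *m E *m Ad) ^+ 2 / nA ^+ 2)
                             (frob (Bd *m E *m Ad *m A) ^+ 2 / nB ^+ 2)) in
  let eps1 := nA ^+ 2 * nB ^+ 2 *
      (frob E ^+ 2 - Num.max (frob (B *m Bd *m E *m Ad) ^+ 2 / nA ^+ 2)
                             (frob (Bd *m E *m Ad *m A) ^+ 2 / nB ^+ 2)) in
  let eps2 := nA ^+ 2 * nB ^+ 2 *
      (frob E ^+ 2 - Num.max (frob (A *m Ad *m E *m Bd) ^+ 2 / nB ^+ 2)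
                             (frob (Ad *m E *m Bd *m B) ^+ 2 / nA ^+ 2)) in
  frob (Bd - Ad) ^+ 2 <= Num.min (delta1 + frob (Bd *m E *m Ad) ^+ 2)
                                 (delta2 + frob (Ad *m E *m Bd) ^+ 2)
  /\ (\rank A = \rank B ->
      frob (Bd - Ad) ^+ 2 <= Num.min (eps1 + frob (Bd *m E *m Ad) ^+ 2)
                                     (eps2 + frob (Ad *m E *m Bd) ^+ 2)).
Proof.
move=> E nA nB d1 d2 e1 e2; rewrite {}/d1 {}/d2 {}/e1 {}/e2 {}/E {}/nA {}/nB.
rewrite !sqr_frob; split.
  have := frob2_pinv_sub_le_max4 hB hA.
  rewrite -[A - B]opprB -[Ad - Bd]opprB !mulmxN !mulNmx !frob2N.
  rewrite [X in _ <= X * _ + _]maxC => le2.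
  by rewrite le_min; apply/andP; split; [apply: frob2_pinv_sub_le_max4 | apply: le2].
move=> rk; have := frob2_pinv_sub_le_eqrank hB hA (esym rk).
rewrite -[A - B]opprB -[Ad - Bd]opprB !mulmxN !mulNmx !frob2N.
rewrite [X in _ <= X * _ + _]mulrC => le2.
by rewrite le_min; apply/andP; split; [apply: frob2_pinv_sub_le_eqrank | apply: le2].
Qed.
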